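(* Let $m$ be a positive integer and $e$ an integer with $1<e<3^m-1$. If $x^e$ is APN over $\mathrm{GF}(3^m)$, then the ternary cyclic code $\mathcal{C}_{(1,e)}$ has parameters $[3^m-1,\,3^m-1-2m,\,4]$.
   Context: Let $q=3^m$, $n=q-1$, $\alpha$ a generator of $\mathrm{GF}(q)^*$, and $m_a(x)$ the minimal polynomial of $a\in\mathrm{GF}(q)$ over $\mathrm{GF}(3)$. $C_j$ denotes the $3$-cyclotomic coset modulo $n$ containing $j$, i.e. $\{j,3j,3^2j,\dots\}$ mod $n$. For $1<e<q-1$ with $e\notin C_1$, $\mathcal{C}_{(1,e)}$ is the cyclic code of length $n$ over $\mathrm{GF}(3)$ with generator polynomial $m_\alpha(x)m_{\alpha^e}(x)$ (when $x^e$ is APN one has $e\notin C_1$). A function $f$ on $\mathrm{GF}(q)$ is APN if $\max_{a\in\mathrm{GF}(q)^*}\max_{b\in\mathrm{GF}(q)}|\{x\in\mathrm{GF}(q): f(x+a)-f(x)=b\}|=2$. *)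

From HB Require Import structures.
From mathcomp Require Import all_boot all_order all_algebra.
Set Implicit Arguments. Unset Strict Implicit. Unset Printing Implicit Defensive.
Import GRing.Theory.
Local Open Scope ring_scope.

Definition F3_to (F : fieldType) (z : 'F_3) : F := (nat_of_ord z)%:R.

Definition is_minpoly_F3 (F : fieldType) (a : F) (p : {poly 'F_3}) : Prop :=
  [/\ p \is monic, root (map_poly (@F3_to F) p) a &
      forall q : {poly 'F_3}, q != 0 -> root (map_poly (@F3_to F) q) a ->
        (size p <= size q)%N].

Definition APN (F : finFieldType) (f : F -> F) : Prop :=
  (\max_(a : F | a != 0%R) \max_(b : F) #|[set x : F | (f (x + a) - f x)%R == b]|)%N = 2%N.

Definition word_poly (n : nat) (c : 'rV['F_3]_n) : {poly 'F_3} :=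
  \sum_(i < n) (c ord0 i)%:P * 'X^i.

Definition cyclic_code (n : nat) (g : {poly 'F_3}) : {set 'rV['F_3]_n} :=
  [set c | g %| word_poly c].

Definition hweight (n : nat) (c : 'rV['F_3]_n) : nat := #|[set i | c ord0 i != 0]|.

Definition code_dim (n : nat) (C : {set 'rV['F_3]_n}) : nat :=
  \dim (span (enum C)).

Definition has_min_dist (n : nat) (C : {set 'rV['F_3]_n}) (d : nat) : Prop :=
  (exists2 c, c \in C & (c != 0) && (hweight c == d)) /\
  (forall c, c \in C -> c != 0 -> (d <= hweight c)%N).

(* Write f x = x^e and D_a f x = f (x + a) - f x.  APN means that no three
   points share a value of D_a f.  Since D_1 f vanishes at 1/(z - 1) for every
   e-th root of unity z != 1, gcd(e, 3^m - 1) <= 2; hence alpha^e has order at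
   least (3^m - 1)/2 and, like alpha, a minimal polynomial of degree m.  It is
   not a conjugate alpha^(3^j) of alpha, since x^e would then be additive, so
   the generator has degree 2m.  A nonzero codeword of weight at most 3 gives
   c1 u + c2 v + c3 w = 0 = c1 u^e + c2 v^e + c3 w^e for distinct nonzero
   u, v, w and coefficients in GF(3); each sign pattern yields three points
   with the same difference (e is even, x^e is homogeneous, and u + v + w = 0
   means that u, v, w is an arithmetic progression).  Finally a collision
   D_a f x = D_a f y gives the weight-4 codeword X^i1 - X^i2 - X^i3 + X^i4
   where alpha^i1, ..., alpha^i4 are x + a, x, y + a, y. *)

From HB Require Import structures.
From mathcomp Require Import all_boot all_order all_algebra all_field.
From mathcomp Require Import ring zify.
Set Implicit Arguments. Unset Strict Implicit. Unset Printing Implicit Defensive.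
Import GRing.Theory.
Local Open Scope ring_scope.

Section WordPoly.
Variable k : nat.
Implicit Types (c u v : 'rV['F_3]_k) (p : {poly 'F_3}).

Definition poly_row p : 'rV['F_3]_k := \row_(i < k) p`_i.

Lemma coef_word_poly_sum c j :
  (word_poly c)`_j = \sum_(i < k) c ord0 i * (j == i)%:R.
Proof. by rewrite coef_sum; apply: eq_bigr => i _; rewrite coefCM coefXn. Qed.

Lemma coef_word_poly c (i : 'I_k) : (word_poly c)`_i = c ord0 i.
Proof.
rewrite coef_word_poly_sum (bigD1 i) //= eqxx mulr1 big1 ?addr0 // => j ji.
by rewrite eq_sym (inj_eq val_inj) (negbTE ji) mulr0.
Qed.

Lemma size_word_poly c : (size (word_poly c) <= k)%N.
Proof.
apply/leq_sizeP => j kj; rewrite coef_word_poly_sum big1 // => i _.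
by rewrite (gtn_eqF (leq_trans (ltn_ord i) kj)) mulr0.
Qed.

Lemma word_poly_is_linear : linear (@word_poly k).
Proof.
move=> a u v; rewrite /word_poly scaler_sumr -big_split; apply: eq_bigr => i _ /=.
by rewrite !mxE polyCD polyCM mulrDl -mulrA mul_polyC.
Qed.

HB.instance Definition _ :=
  GRing.isLinear.Build 'F_3 'rV['F_3]_k {poly 'F_3} _ (@word_poly k)
    word_poly_is_linear.

Lemma word_poly0 : word_poly (0 : 'rV['F_3]_k) = 0. Proof. exact: raddf0. Qed.
Lemma word_polyD u v : word_poly (u + v) = word_poly u + word_poly v.
Proof. exact: raddfD. Qed.
Lemma word_polyB u v : word_poly (u - v) = word_poly u - word_poly v.
Proof. exact: raddfB. Qed.
Lemma word_polyZ a u : word_poly (a *: u) = a *: word_poly u.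
Proof. exact: linearZ. Qed.

Lemma word_polyK p : (size p <= k)%N -> word_poly (poly_row p) = p.
Proof.
move=> sp; apply/polyP => j; case: (ltnP j k) => [jk | kj].
  by rewrite -[j]/(val (Ordinal jk)) coef_word_poly mxE.
by rewrite !nth_default // (leq_trans sp kj, leq_trans (size_word_poly _) kj).
Qed.

Lemma poly_rowK c : poly_row (word_poly c) = c.
Proof. by apply/rowP => i; rewrite mxE coef_word_poly. Qed.

Lemma word_poly_inj : injective (@word_poly k).
Proof. exact: can_inj poly_rowK. Qed.

End WordPoly.

Lemma subset_card_eq (T : finType) (A : {set T}) k :
  (#|A| <= k <= #|T|)%N -> exists2 B : {set T}, A \subset B & #|B| = k.
Proof.
case/andP=> leAk lekT.
have /card_geqP[s [uniq_s size_s sAs]] : (k - #|A| <= #|~: A|)%N.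
  by have := cardsC A; lia.
set S := [set x in s]; exists (A :|: S); first exact: subsetUl.
have disjAS : [disjoint A & S].
  by rewrite disjoint_sym disjoints_subset; apply/subsetP => x; rewrite inE; exact: sAs.
have /eqP-> : #|A :|: S| == (#|A| + #|S|)%N by rewrite (leq_card_setU A S).2.
by rewrite cardsE (card_uniqP _) // size_s subnKC.
Qed.

Lemma cover_by_three (T : finType) (A : {set T}) : (#|A| <= 3 <= #|T|)%N ->
  exists x y z, [/\ x != y, x != z, y != z & A \subset [set x; y; z]].
Proof.
case/subset_card_eq => B sAB cardB.
have /card_gt2P[x [y [z [[xB yB zB] [neq_xy neq_yz neq_zx]]]]] : (2 < #|B|)%N.
  by rewrite cardB.
have sXB : [set x; y; z] \subset B.
  by apply/subsetP => t; rewrite !inE -orbA; case/or3P => /eqP->.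
have BE : B = [set x; y; z].
  apply/esym/eqP; rewrite eqEcard sXB cardB -setUA cardsU1 cards2 !inE.
  by rewrite neq_yz negb_or neq_xy eq_sym neq_zx.
by exists x, y, z; split; rewrite // -?BE // eq_sym.
Qed.

Lemma addr_eq_self (V : zmodType) (x y : V) : (x + y == x) = (y == 0).
Proof. by rewrite -[X in _ == X]addr0 (inj_eq (addrI x)). Qed.

Lemma F3_cube (c : 'F_3) : c ^+ 3 = c.
Proof. by apply/val_inj; case: c => [[|[|[|]]] ?]. Qed.

Section CharThree.
Variable F : fieldType.
Hypothesis charF : 3%N \in [pchar F].

Lemma natr3_char3 : 3%:R = 0 :> F.
Proof. exact: pcharf0 charF. Qed.

Lemma natr2_char3 : 2%:R = -1 :> F.
Proof. by apply/eqP; rewrite -subr_eq0 opprK -natr3_char3 (natrD _ 2 1). Qed.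

Lemma natr_mod3 k : (k %% 3)%:R = k%:R :> F.
Proof. by rewrite {2}(divn_eq k 3) natrD natrM natr3_char3 mulr0 add0r. Qed.

Lemma F3_to_is_zmod_morphism : zmod_morphism (F3_to F).
Proof.
move=> a b; rewrite /F3_to /= natr_mod3 natrD /= natr_mod3.
by rewrite natrB ?natr3_char3 ?sub0r // ltnW.
Qed.

Lemma F3_to_is_monoid_morphism : monoid_morphism (F3_to F).
Proof. by split=> // a b; rewrite /F3_to /= natr_mod3 natrM. Qed.

HB.instance Definition _ :=
  GRing.isZmodMorphism.Build _ _ (F3_to F) F3_to_is_zmod_morphism.
HB.instance Definition _ :=
  GRing.isMonoidMorphism.Build _ _ (F3_to F) F3_to_is_monoid_morphism.

Lemma char3_sum_AP (x y z : F) : (x + y + z == 0) = (y - x == z - y).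
Proof.
rewrite -[y - x == _]subr_eq0.
have -> : y - x - (z - y) = - (x + y + z) + 3%:R * y by ring.
by rewrite natr3_char3 mul0r addr0 oppr_eq0.
Qed.

Lemma frobenius_expD (x y : F) j : (x + y) ^+ (3 ^ j) = x ^+ (3 ^ j) + y ^+ (3 ^ j).
Proof.
elim: j => [|j IHj]; first by rewrite !expr1.
by rewrite expnSr !exprM IHj -!(pFrobenius_autE charF) rmorphD.
Qed.

Lemma size_map_F3 p : size (map_poly (F3_to F) p) = size p.
Proof. exact: size_map_poly. Qed.

Definition hornerF3 (p : {poly 'F_3}) (x : F) := (map_poly (F3_to F) p).[x].

Lemma hornerF3D p q x : hornerF3 (p + q) x = hornerF3 p x + hornerF3 q x.
Proof. by rewrite /hornerF3 rmorphD hornerD. Qed.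

Lemma hornerF3B p q x : hornerF3 (p - q) x = hornerF3 p x - hornerF3 q x.
Proof. by rewrite /hornerF3 rmorphB hornerD hornerN. Qed.

Lemma hornerF3M p q x : hornerF3 (p * q) x = hornerF3 p x * hornerF3 q x.
Proof. by rewrite /hornerF3 rmorphM hornerM. Qed.

Lemma hornerF3C c x : hornerF3 c%:P x = F3_to F c.
Proof. by rewrite /hornerF3 map_polyC hornerC. Qed.

Lemma hornerF3Xn i x : hornerF3 'X^i x = x ^+ i.
Proof. by rewrite /hornerF3 map_polyXn hornerXn. Qed.

Lemma hornerF3_word k (c : 'rV['F_3]_k) x :
  hornerF3 (word_poly c) x = \sum_(i < k) F3_to F (c ord0 i) * x ^+ i.
Proof.
rewrite /hornerF3 rmorph_sum horner_sum; apply: eq_bigr => i _.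
by rewrite rmorphM /= map_polyC map_polyXn hornerCM hornerXn.
Qed.

Lemma hornerF3_cube p x : hornerF3 p (x ^+ 3) = hornerF3 p x ^+ 3.
Proof.
have Fp : map_poly (pFrobenius_aut charF) (map_poly (F3_to F) p) = map_poly (F3_to F) p.
  rewrite -map_poly_comp; apply: eq_map_poly => c /=.
  by rewrite pFrobenius_autE -rmorphXn F3_cube.
by rewrite /hornerF3 -[in LHS]Fp -!(pFrobenius_autE charF) horner_map.
Qed.

Lemma hornerF3_frobenius_root p x j :
  hornerF3 p x = 0 -> hornerF3 p (x ^+ (3 ^ j)) = 0.
Proof.
move=> px0; elim: j => [|j IHj]; first by rewrite expr1.
by rewrite expnSr exprM hornerF3_cube IHj expr0n.
Qed.

Lemma hornerF3_word_support3 k (c : 'rV['F_3]_k) (i1 i2 i3 : 'I_k) x :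
    i1 != i2 -> i1 != i3 -> i2 != i3 ->
    [set i | c ord0 i != 0] \subset [set i1; i2; i3] ->
  hornerF3 (word_poly c) x = F3_to F (c ord0 i1) * x ^+ i1 +
    F3_to F (c ord0 i2) * x ^+ i2 + F3_to F (c ord0 i3) * x ^+ i3.
Proof.
move=> neq12 neq13 neq23 /subsetP supp_c.
rewrite hornerF3_word (bigID (mem [set i1; i2; i3])) /= [X in _ + X]big1 ?addr0.
  rewrite (eq_bigl (mem [:: i1; i2; i3])) => [|i]; last by rewrite !inE orbA.
  rewrite -big_uniq /=; last by rewrite !inE negb_or neq12 neq13 neq23.
  by rewrite !big_cons big_nil addr0 addrA.
move=> i i_out; have -> : c ord0 i = 0.
  by apply/eqP; apply: contraNT i_out => ci; apply: supp_c; rewrite inE.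
by rewrite rmorph0 mul0r.
Qed.

Section MinimalPolynomial.
Variables (x : F) (p : {poly 'F_3}).
Hypothesis px : is_minpoly_F3 x p.

Lemma minpoly_neq0 : p != 0.
Proof. by case: px => /monic_neq0. Qed.

Lemma minpoly_root : hornerF3 p x = 0.
Proof. by case: px => _ /rootP. Qed.

Lemma minpoly_dvd q : hornerF3 q x = 0 -> p %| q.
Proof.
move=> qx; have [_ _ px_min] := px.
apply/modp_eq0P/eqP/negP => /negP r_neq0.
have : (size p <= size (q %% p)%R)%N.
  apply: px_min r_neq0 _; apply/rootP; move: qx.
  by rewrite {1}(divp_eq q p) hornerF3D hornerF3M minpoly_root mulr0 add0r.
by rewrite leqNgt ltn_modp minpoly_neq0.
Qed.

Lemma minpoly_size_gt1 : (1 < size p)%N.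
Proof.
rewrite ltnNge; apply/negP => sp; have [monp _ _] := px.
have /size_poly1P[c _ pc] : size p == 1%N.
  by rewrite eqn_leq sp size_poly_gt0 minpoly_neq0.
move: monp minpoly_root; rewrite pc monicE lead_coefC => /eqP->.
by rewrite hornerF3C rmorph1 => /eqP; rewrite oner_eq0.
Qed.

Lemma minpoly_factor_size h q :
  p = h * q -> hornerF3 q x != 0 -> (size q <= 1)%N.
Proof.
move=> pE qx; have [_ _ px_min] := px.
have [h0 | h_neq0] := eqVneq h 0; first by move: minpoly_neq0; rewrite pE h0 mul0r eqxx.
have [q0 | q_neq0] := eqVneq q 0; first by rewrite q0 size_poly0.
have hx : root (map_poly (F3_to F) h) x.
  apply/rootP; apply/eqP; move: minpoly_root; rewrite pE hornerF3M => /eqP.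
  by rewrite mulf_eq0 (negbTE qx) orbF.
have := px_min _ h_neq0 hx; rewrite pE size_mul //.
have := size_poly_gt0 h; rewrite h_neq0; set a := size h; set b := size q; lia.
Qed.

End MinimalPolynomial.

Lemma minpoly_coprime (x y : F) p q :
  is_minpoly_F3 x p -> is_minpoly_F3 y q -> hornerF3 p y != 0 -> coprimep p q.
Proof.
move=> px qy py; rewrite coprimep_def.
have g_neq0 : gcdp p q != 0 by rewrite gcdp_eq0 negb_and (minpoly_neq0 px).
have [gx | gx] := eqVneq (hornerF3 (gcdp p q) x) 0.
  have /divpK qE : p %| q := dvdp_trans (minpoly_dvd px gx) (dvdp_gcdr _ _).
  have := minpoly_factor_size qy (esym qE) py.
  by rewrite leqNgt (minpoly_size_gt1 px).
have := minpoly_factor_size px (esym (divpK (dvdp_gcdl p q))) gx.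
by rewrite leq_eqVlt ltnS leqn0 size_poly_eq0 (negbTE g_neq0) orbF.
Qed.

(* The residues X^i mod q, i < k, are distinct words of length deg q. *)
Lemma card_distinct_powers_le (q : {poly 'F_3}) (x : F) k : q != 0 -> hornerF3 q x = 0 ->
    (forall i j, (i < k)%N -> (j < k)%N -> x ^+ i = x ^+ j -> i = j) ->
  (k <= 3 ^ (size q).-1)%N.
Proof.
move=> q_neq0 qx x_inj; set d := (size q).-1.
pose r (i : 'I_k) := poly_row d ('X^i %% q).
have evr i : hornerF3 (word_poly (r i)) x = x ^+ i.
  rewrite word_polyK; last by rewrite -ltnS /d prednK ?ltn_modp ?size_poly_gt0.
  by rewrite -hornerF3Xn {2}(divp_eq 'X^i q) hornerF3D hornerF3M qx mulr0 add0r.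
have r_inj : injective r.
  move=> i j /(congr1 (fun c => hornerF3 (word_poly c) x)).
  by rewrite !evr => /x_inj Eij; apply/val_inj/Eij.
by have := leq_card r r_inj; rewrite card_ord card_mx card_Fp // mul1n.
Qed.
End CharThree.

Section FiniteCharThree.
Variables (F : finFieldType) (m : nat).
Hypotheses (charF : 3%N \in [pchar F]) (cardF : #|F| = (3 ^ m)%N).

Lemma minpoly_size_le (x : F) p : is_minpoly_F3 x p -> (size p <= m.+1)%N.
Proof.
move=> px; pose ev (c : 'rV['F_3]_m.+1) := hornerF3 (word_poly c) x.
have /injectivePn[c [c' neq_cc' Ecc']] : ~~ injectiveb ev.
  apply/injectiveP => /leq_card.
  by rewrite card_mx card_Fp // cardF mul1n leq_exp2l // ltnn.
have [_ _ px_min] := px.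
apply: leq_trans (size_word_poly (c - c')); apply: px_min.
  by rewrite word_polyB subr_eq0 (inj_eq (@word_poly_inj _)).
by apply/rootP; rewrite -/(hornerF3 _ x) word_polyB hornerF3B // -/(ev c) Ecc' subrr.
Qed.

Lemma size_minpoly (x : F) p k : is_minpoly_F3 x p -> (3 ^ m.-1 < k)%N ->
    (forall i j, (i < k)%N -> (j < k)%N -> x ^+ i = x ^+ j -> i = j) ->
  size p = m.+1.
Proof.
move=> px km x_inj; apply/anti_leq; rewrite (minpoly_size_le px) /=.
have := card_distinct_powers_le charF (minpoly_neq0 px) (minpoly_root px) x_inj.
move/(leq_trans km); rewrite ltn_exp2l // -ltnS.
by case: (size p) => // s; case: m.
Qed.

End FiniteCharThree.

Section PrimitiveRoot.
Variables (F : finFieldType) (n : nat) (alpha : F).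
Hypotheses (cardF : #|F| = n.+1) (alpha_prim : n.-primitive_root alpha).

Lemma prim_root_neq0 : alpha != 0.
Proof.
apply: contraPneq (prim_expr_order alpha_prim) => ->.
by rewrite expr0n eqn0Ngt (prim_order_gt0 alpha_prim) => /eqP; rewrite eq_sym oner_eq0.
Qed.

Lemma prim_root_expr_inj i j : (i < n)%N -> (j < n)%N ->
  alpha ^+ i = alpha ^+ j -> i = j.
Proof.
by move=> ltin ltjn /eqP; rewrite (eq_prim_root_expr alpha_prim) !modn_small // => /eqP.
Qed.

Lemma prim_root_expr_surj x : x != 0 -> exists i : 'I_n, x = alpha ^+ i.
Proof.
move=> x_neq0; have xn1 : x ^+ n = 1.
  by apply: (mulIf x_neq0); rewrite mul1r -exprSr -cardF expf_card.
by have [i ->] := prim_rootP alpha_prim xn1; exists i.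
Qed.

End PrimitiveRoot.

Section APN.
Variables (F : finFieldType) (f : F -> F).
Hypothesis f_APN : APN f.
Implicit Types a b x y z u v w : F.

Local Notation D a x := (f (x + a) - f x%R).

Lemma APN_fibre_le2 a b : a != 0 -> (#|[set x | D a x == b]| <= 2)%N.
Proof.
by move=> a_neq0; move/eq_leq/bigmax_leqP/(_ a a_neq0)/bigmax_leqP: f_APN; apply.
Qed.

Lemma APN_no_three_collisions a x y z : a != 0 ->
  x != y -> x != z -> y != z -> D a x = D a y -> D a x = D a z -> False.
Proof.
move=> a_neq0 neq_xy neq_xz neq_yz Dxy Dxz.
have : [set x; y; z] \subset [set t | D a t == D a x].
  by apply/subsetP => t; rewrite !inE -orbA; case/or3P => /eqP->; rewrite -?Dxy -?Dxz.
move/subset_leq_card/leq_trans/(_ (APN_fibre_le2 _ a_neq0)).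
by rewrite -setUA cardsU1 cards2 !inE neq_yz negb_or neq_xy neq_xz.
Qed.

Lemma APN_collision : exists a x y, [/\ a != 0, x != y & D a x = D a y].
Proof.
have [|no_coll] := boolP [exists a, exists b,
                            (a != 0) && (1 < #|[set x | D a x == b]|)%N].
  case/existsP => a /existsP[b /andP[a_neq0 /card_gt1P[x [y [Dx Dy neq_xy]]]]].
  by exists a, x, y; move: Dx Dy; rewrite !inE => /eqP-> /eqP->.
suff : (2 <= 1)%N by [].
rewrite -[X in (X <= _)%N]f_APN; apply/bigmax_leqP => a a_neq0.
apply/bigmax_leqP => b _; move: no_coll.
rewrite negb_exists => /forallP/(_ a); rewrite negb_exists => /forallP/(_ b).
by rewrite a_neq0 -leqNgt.
Qed.

Section CharThree.
Hypothesis charF : 3%N \in [pchar F].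

(* In characteristic 3, x, x + a and x + 2a form an orbit of translation by a:
   two equal consecutive differences force the third one to be equal too. *)
Lemma APN_consecutive_derivatives a x : a != 0 -> D a x != D a (x + a).
Proof.
move=> a_neq0; apply/negP => /eqP Dx.
have a2 : a + a = - a by rewrite -mulr2n -mulr_natl natr2_char3 // mulN1r.
have shift_neq (b c : F) : c != 0 -> b != b + c by move=> ?; rewrite eq_sym addr_eq_self.
have x3a : x + a + a + a = x by rewrite -!addrA a2 subrr addr0.
have Dx2 : D a x = D a (x + a + a).
  have : f (x + a) + f (x + a + a) + f x == 0.
    by rewrite addrC addrA (char3_sum_AP charF) Dx.
  by rewrite (char3_sum_AP charF) => /eqP E; rewrite x3a Dx E.
apply: (@APN_no_three_collisions a x (x + a) (x + a + a)) => //.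
- exact: shift_neq.
- by rewrite -addrA a2 shift_neq ?oppr_eq0.
- exact: shift_neq.
Qed.

Lemma APN_sum3_neq0 u v w : u != v -> u + v + w = 0 -> f u + f v + f w != 0.
Proof.
move=> neq_uv /eqP; rewrite !(char3_sum_AP charF) => /eqP wE.
have a_neq0 : v - u != 0 by rewrite subr_eq0 eq_sym.
have -> : w = v + (v - u) by rewrite wE addrC subrK.
set a := v - u; have -> : v = u + a by rewrite /a addrC subrK.
exact: APN_consecutive_derivatives.
Qed.

End CharThree.

End APN.

(* Proves [X = Y] from [h : Z = 0] when [X - Y] is [Z] or [- Z] up to ring
   normalisation. *)
Ltac lin_consequence h :=
  apply/eqP; rewrite -subr_eq0; apply/eqP;
  first [ rewrite -[in RHS]h; ring | rewrite -[in RHS]oppr0 -[in RHS]h; ring ].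

Section PowerAPN.
Variables (F : finFieldType) (e : nat).
Hypotheses (charF : 3%N \in [pchar F]) (e_gt0 : (0 < e)%N).
Hypothesis power_APN : APN (fun x : F => x ^+ e).
Implicit Types u v w x y z : F.

Lemma expr0e : (0 : F) ^+ e = 0.
Proof. by rewrite expr0n gtn_eqF. Qed.

Lemma oner_neqN1_char3 : (1 : F) != -1.
Proof. by rewrite -addr_eq0 -(natrD _ 1 1) natr2_char3 // oppr_eq0 oner_eq0. Qed.

Lemma power_APN_even : ~~ odd e.
Proof.
apply/negP => odd_e.
have exprN_e x : (- x) ^+ e = - x ^+ e by rewrite exprNn -signr_odd odd_e mulN1r.
have two : 1 + 1 = - 1 :> F by rewrite -(natrD _ 1 1) natr2_char3.
apply: (@APN_no_three_collisions _ _ power_APN 1 0 1 (-1)).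
- exact: oner_neq0.
- by rewrite eq_sym oner_neq0.
- by rewrite eq_sym oppr_eq0 oner_neq0.
- exact: oner_neqN1_char3.
- by rewrite add0r expr0e subr0 two exprN_e !expr1n -opprD two opprK.
- by rewrite add0r expr1n expr0e subr0 addNr expr0e exprN_e expr1n sub0r opprK.
Qed.

Lemma exprN_e x : (- x) ^+ e = x ^+ e.
Proof. by rewrite exprNn -signr_odd (negbTE power_APN_even) mul1r. Qed.

Lemma power_sum_opp_neq0 u : u != 0 -> u ^+ e + (- u) ^+ e != 0.
Proof.
move=> u_neq0; rewrite exprN_e -mulr2n -mulr_natl natr2_char3 // mulN1r oppr_eq0.
exact: expf_neq0.
Qed.

(* By homogeneity, D_u f takes the value u^e at 0, at v and at u^2/v. *)
Lemma power_APN_sum_neq u v : u != 0 -> v != 0 -> u != v -> u + v != 0 ->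
  u ^+ e + v ^+ e != (u + v) ^+ e.
Proof.
move=> u_neq0 v_neq0 neq_uv uv_neq0; apply/negP => /eqP Euv.
have D0 : (0 + u) ^+ e - 0 ^+ e = u ^+ e by rewrite add0r expr0e subr0.
have Dv : (v + u) ^+ e - v ^+ e = u ^+ e by rewrite [v + u]addrC -Euv addrK.
have Dw : (u ^+ 2 / v + u) ^+ e - (u ^+ 2 / v) ^+ e = u ^+ e.
  have -> : u ^+ 2 / v + u = u / v * (u + v) by field.
  have -> : u ^+ 2 / v = u / v * u by field.
  rewrite !exprMn -mulrBr -Euv [_ + v ^+ e]addrC addrK.
  by rewrite exprVn divfK ?expf_neq0.
apply: (@APN_no_three_collisions _ _ power_APN u 0 v (u ^+ 2 / v)) => //.
- by rewrite eq_sym.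
- by rewrite eq_sym mulf_neq0 ?invr_eq0 ?expf_neq0.
- apply: contra uv_neq0 => /eqP vE.
  have : v ^+ 2 - u ^+ 2 == 0 by rewrite expr2 {1}vE divfK // subrr.
  by rewrite subr_sqr mulf_eq0 subr_eq0 eq_sym (negbTE neq_uv) addrC.
- by rewrite D0 Dv.
- by rewrite D0 Dw.
Qed.

Lemma power_APN_unity_order z : z ^+ e = 1 -> [|| z == 1, z ^+ 2 == 1 | z ^+ 3 == 1].
Proof.
move=> ze1; apply: contraT; rewrite !negb_or => /and3P[z1 z2 z3]; exfalso.
have z_neq0 : z != 0.
  by apply/eqP => z0; move: ze1; rewrite z0 expr0e => /eqP; rewrite eq_sym oner_eq0.
have D1 k : z ^+ k != 1 -> ((z ^+ k - 1)^-1 + 1) ^+ e - ((z ^+ k - 1)^-1) ^+ e = 0.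
  move=> zk1; have zk1' : z ^+ k - 1 != 0 by rewrite subr_eq0.
  have -> : (z ^+ k - 1)^-1 + 1 = z ^+ k * (z ^+ k - 1)^-1 by field.
  by rewrite exprMn exprAC ze1 expr1n mul1r subrr.
have inv_neq i j : z ^+ i != z ^+ j -> (z ^+ i - 1)^-1 != (z ^+ j - 1)^-1.
  by move=> neq_ij; apply: contra neq_ij => /eqP /invr_inj /addIr ->.
have zk k : (0 < k <= 3)%N -> z ^+ k != 1 by case: k => [|[|[|[|]]]].
have neq_pow i j : (i < j <= 3)%N -> z ^+ i != z ^+ j.
  case/andP=> lt_ij le_j3; have /zk : (0 < j - i <= 3)%N.
    by rewrite subn_gt0 lt_ij (leq_trans (leq_subr _ _)).
  apply: contra => /eqP Eij; apply/eqP/(mulfI (expf_neq0 i z_neq0)).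
  by rewrite mulr1 -exprD subnKC ?Eij // ltnW.
apply: (@APN_no_three_collisions _ _ power_APN 1 (z - 1)^-1 (z ^+ 2 - 1)^-1 (z ^+ 3 - 1)^-1).
- exact: oner_neq0.
- by rewrite -[z]expr1 inv_neq ?neq_pow.
- by rewrite -[z]expr1 inv_neq ?neq_pow.
- by rewrite inv_neq ?neq_pow.
- by rewrite -[z]expr1 !D1 ?expr1.
- by rewrite -[z]expr1 !D1 ?expr1.
Qed.

Lemma power_APN_not_frobenius j : exists x, x ^+ e != x ^+ (3 ^ j).
Proof.
apply/existsP; apply: contraT; rewrite negb_exists => /forallP frob; exfalso.
have D1 x : (x + 1) ^+ e - x ^+ e = 1.
  by rewrite !(eqP (negPn (frob _))) frobenius_expD // expr1n addrAC subrr add0r.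
apply: (@APN_no_three_collisions _ _ power_APN 1 0 1 (-1)); rewrite ?D1 //.
- exact: oner_neq0.
- by rewrite eq_sym oner_neq0.
- by rewrite eq_sym oppr_eq0 oner_neq0.
- exact: oner_neqN1_char3.
Qed.

(* Up to sign the nonzero coefficients are (1), (1, +-1) or (1, +-1, +-1);
   every case is one of the contradictions [opp_rel], [sum_rel], [sum3_rel]. *)
Lemma power_APN_F3_relation (c1 c2 c3 : 'F_3) u v w :
    u != 0 -> v != 0 -> w != 0 -> u != v -> u != w -> v != w ->
    F3_to F c1 * u + F3_to F c2 * v + F3_to F c3 * w = 0 ->
    F3_to F c1 * u ^+ e + F3_to F c2 * v ^+ e + F3_to F c3 * w ^+ e = 0 ->
  [&& c1 == 0, c2 == 0 & c3 == 0].
Proof.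
move=> u_neq0 v_neq0 w_neq0 neq_uv neq_uw neq_vw.
have opp_rel x y : x != 0 -> x + y = 0 -> x ^+ e + y ^+ e = 0 -> False.
  move=> x_neq0 /eqP; rewrite addrC addr_eq0 => /eqP->.
  by move=> /eqP; apply/negP; exact: power_sum_opp_neq0 x_neq0.
have sum_rel x y z : x != 0 -> y != 0 -> z != 0 -> x != y ->
    x + y = z -> x ^+ e + y ^+ e = z ^+ e -> False.
  move=> x_neq0 y_neq0 z_neq0 neq_xy xyz /eqP.
  by rewrite -xyz; apply/negP; apply: power_APN_sum_neq; rewrite ?xyz.
have sum3_rel x y z : x != y -> x + y + z = 0 -> x ^+ e + y ^+ e + z ^+ e = 0 -> False.
  by move=> neq_xy xyz /eqP; apply/negP; exact: (APN_sum3_neq0 power_APN charF neq_xy xyz).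
case: c1 => [[|[|[|]]] ?] //; case: c2 => [[|[|[|]]] ?] //;
  case: c3 => [[|[|[|]]] ?] //; rewrite /F3_to /= ?natr2_char3 // => h1 h2;
  exfalso; first
  [ apply: (negP u_neq0); apply/eqP; lin_consequence h1
  | apply: (negP v_neq0); apply/eqP; lin_consequence h1
  | apply: (negP w_neq0); apply/eqP; lin_consequence h1
  | apply: (negP neq_uv); apply/eqP; lin_consequence h1
  | apply: (negP neq_uw); apply/eqP; lin_consequence h1
  | apply: (negP neq_vw); apply/eqP; lin_consequence h1
  | apply: (opp_rel u v u_neq0); [lin_consequence h1 | lin_consequence h2]
  | apply: (opp_rel u w u_neq0); [lin_consequence h1 | lin_consequence h2]
  | apply: (opp_rel v w v_neq0); [lin_consequence h1 | lin_consequence h2]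
  | apply: (sum_rel u v w u_neq0 v_neq0 w_neq0 neq_uv);
      [lin_consequence h1 | lin_consequence h2]
  | apply: (sum_rel u w v u_neq0 w_neq0 v_neq0 neq_uw);
      [lin_consequence h1 | lin_consequence h2]
  | apply: (sum_rel v w u v_neq0 w_neq0 u_neq0 neq_vw);
      [lin_consequence h1 | lin_consequence h2]
  | apply: (sum3_rel u v w neq_uv); [lin_consequence h1 | lin_consequence h2] ].
Qed.

Lemma power_APN_collision_neq0 a x y : a != 0 -> x != y ->
  (x + a) ^+ e - x ^+ e = (y + a) ^+ e - y ^+ e -> x != 0.
Proof.
move=> a_neq0 neq_xy Dxy; apply/eqP => x0; move: Dxy neq_xy.
rewrite x0 add0r expr0e subr0 eq_sym => Dy y_neq0.
have consec z := APN_consecutive_derivatives power_APN charF z a_neq0.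
have neq_ay : a != y.
  apply: contra_neq (consec 0) => ay; rewrite -ay in Dy.
  by rewrite add0r expr0e subr0.
have ya_neq0 : y + a != 0.
  apply: contra_neq (consec y) => ya0; rewrite ya0 expr0e sub0r in Dy.
  by rewrite ya0 add0r expr0e sub0r subr0 Dy.
have ay_neq0 : a + y != 0 by rewrite addrC.
by move/negP: (power_APN_sum_neq a_neq0 y_neq0 neq_ay ay_neq0); apply; rewrite Dy subrK addrC.
Qed.

Lemma power_APN_weight4_relation : exists x1 x2 x3 x4 : F,
  [/\ uniq [:: x1; x2; x3; x4], 0 \notin [:: x1; x2; x3; x4],
      x1 - x2 - x3 + x4 = 0 & x1 ^+ e - x2 ^+ e - x3 ^+ e + x4 ^+ e = 0].
Proof.
have [a [x [y [a_neq0 neq_xy Dxy]]]] := APN_collision power_APN.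
have consec z := APN_consecutive_derivatives power_APN charF z a_neq0.
have neq_xa_y : x + a != y by apply: contra_neq (consec x) => xay; rewrite xay in Dxy *.
have neq_ya_x : y + a != x by apply: contra_neq (consec y) => yax; rewrite yax in Dxy *.
have neq_xa_ya : x + a != y + a by rewrite (inj_eq (addIr a)).
have Dxy' : ((x + a) + - a) ^+ e - (x + a) ^+ e = ((y + a) + - a) ^+ e - (y + a) ^+ e.
  by apply: oppr_inj; rewrite !addrK !opprB.
have na_neq0 : - a != 0 by rewrite oppr_eq0.
have x_neq0 := power_APN_collision_neq0 a_neq0 neq_xy Dxy.
have y_neq0 : y != 0 by apply: power_APN_collision_neq0 a_neq0 _ (esym Dxy); rewrite eq_sym.
have xa_neq0 := power_APN_collision_neq0 na_neq0 neq_xa_ya Dxy'.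
have ya_neq0 : y + a != 0.
  by apply: power_APN_collision_neq0 na_neq0 _ (esym Dxy'); rewrite eq_sym.
exists (x + a), x, (y + a), y; split.
- rewrite /= !inE !negb_or !addr_eq_self a_neq0 neq_xa_ya neq_xa_y eq_sym neq_ya_x.
  by rewrite neq_xy.
- by rewrite !inE !negb_or ![0 == _]eq_sym x_neq0 y_neq0 xa_neq0 ya_neq0.
- by ring.
have -> : (x + a) ^+ e - x ^+ e - (y + a) ^+ e + y ^+ e =
          ((x + a) ^+ e - x ^+ e) - ((y + a) ^+ e - y ^+ e) by ring.
by rewrite Dxy subrr.
Qed.

End PowerAPN.

Section TernaryCode.
Variables (F : finFieldType) (m e : nat) (alpha : F) (p1 pe : {poly 'F_3}).
Hypotheses (charF : 3%N \in [pchar F]) (cardF : #|F| = (3 ^ m)%N).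
Hypothesis alpha_prim : (3 ^ m - 1)%N.-primitive_root alpha.
Hypothesis e_range : (1 < e < 3 ^ m - 1)%N.
Hypotheses (p1_min : is_minpoly_F3 alpha p1) (pe_min : is_minpoly_F3 (alpha ^+ e) pe).
Hypothesis e_APN : APN (fun x : F => x ^+ e).

Local Notation n := (3 ^ m - 1)%N.
Local Notation g := (p1 * pe).
Local Notation C := (cyclic_code n g).

Lemma e_gt0 : (0 < e)%N.
Proof. by case/andP: e_range => /ltnW. Qed.

Lemma m_ge2 : (2 <= m)%N.
Proof.
rewrite leqNgt; apply/negP => m_le1.
have : (3 ^ m <= 3 ^ 1)%N by rewrite leq_exp2l.
by move: e_range; lia.
Qed.

Lemma expn3_predn : (3 ^ m = 3 * 3 ^ m.-1)%N.
Proof. by rewrite -expnS prednK // (leq_trans _ m_ge2). Qed.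

Lemma expn3_predn_ge3 : (3 <= 3 ^ m.-1)%N.
Proof. by have := m_ge2; case: m => [|[|k]] //= _; rewrite expnS leq_pmulr ?expn_gt0. Qed.

Lemma expn3_predn_lt_half : (3 ^ m.-1 < n %/ 2)%N.
Proof. by rewrite expn3_predn; have := expn3_predn_ge3; lia. Qed.

Lemma expn3_lt_n j : (j < m)%N -> (3 ^ j < n)%N.
Proof.
move=> jm; apply: leq_ltn_trans (leq_trans expn3_predn_lt_half (leq_div _ _)).
by rewrite leq_exp2l // -ltnS prednK // (leq_trans _ m_ge2).
Qed.

Lemma double_m_le_n : (2 * m <= n)%N.
Proof.
have := m_ge2; case: m => // k _; elim: k => // k IHk.
by rewrite expnS; move: IHk; lia.
Qed.

Lemma coprime3n : coprime 3 n.
Proof.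
rewrite prime_coprime //; apply/negP => dvd3n.
have : (3 %| 3 ^ m - n)%N by rewrite dvdn_sub // expn3_predn dvdn_mulr.
by rewrite subKn ?expn_gt0.
Qed.

Lemma cardF_n : #|F| = n.+1.
Proof. by rewrite cardF subn1 prednK ?expn_gt0. Qed.

(* So alpha^e has order at least n/2 > 3^(m-1), which forces its minimal
   polynomial to have degree m. *)
Lemma beta_expr_neq1 t : (0 < t < n %/ 2)%N -> (alpha ^+ e) ^+ t != 1.
Proof.
case/andP=> t_gt0 t_lt; have t_lt_n : (t < n)%N := leq_trans t_lt (leq_div _ _).
apply/negP => /eqP beta_t.
have /(power_APN_unity_order e_gt0 e_APN) : (alpha ^+ t) ^+ e = 1 by rewrite exprAC.
rewrite -!exprM -!(prim_order_dvd alpha_prim).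
have coprime_n3 : coprime n 3 by rewrite coprime_sym coprime3n.
rewrite (Gauss_dvdl _ coprime_n3) orbA orbC orbA orbb.
have t2_gt0 : (0 < t * 2)%N by rewrite muln_gt0 t_gt0.
have := leq_divM n 2; move=> half_le.
by case/orP => [/(dvdn_leq t_gt0) | /(dvdn_leq t2_gt0)]; lia.
Qed.

Lemma beta_expr_inj i j : (i < n %/ 2)%N -> (j < n %/ 2)%N ->
  (alpha ^+ e) ^+ i = (alpha ^+ e) ^+ j -> i = j.
Proof.
wlog le_ij : i j / (i <= j)%N => [hwlog lt_i lt_j E|].
  have [le_ij | /ltnW le_ji] := leqP i j; first exact: hwlog.
  by apply/esym/hwlog.
move=> _ lt_j E; apply/eqP; rewrite eqn_leq le_ij leqNgt; apply/negP => lt_ij.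
have /negP : (alpha ^+ e) ^+ (j - i) != 1.
  by rewrite beta_expr_neq1 // subn_gt0 lt_ij (leq_ltn_trans (leq_subr _ _)).
apply; apply/eqP; apply: (mulfI (expf_neq0 i (expf_neq0 e (prim_root_neq0 alpha_prim)))).
by rewrite mulr1 -exprD subnKC ?E // ltnW.
Qed.

Lemma size_p1 : size p1 = m.+1.
Proof.
apply: (size_minpoly charF cardF p1_min (k := n)); last exact: prim_root_expr_inj alpha_prim.
exact: leq_trans expn3_predn_lt_half (leq_div _ _).
Qed.

Lemma size_pe : size pe = m.+1.
Proof. exact: (size_minpoly charF cardF pe_min expn3_predn_lt_half beta_expr_inj). Qed.

(* Otherwise p1 has the m + 1 roots alpha^e, alpha^(3^j) (j < m), unless
   alpha^e = alpha^(3^j), which makes x^e additive. *)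
Lemma p1_beta_neq0 : hornerF3 p1 (alpha ^+ e) != 0.
Proof.
apply/negP => /eqP p1_beta.
pose conj := [seq alpha ^+ (3 ^ j) | j <- iota 0 m].
have conj_uniq : uniq conj.
  rewrite map_inj_in_uniq ?iota_uniq // => i j; rewrite !mem_iota !add0n => lt_im lt_jm.
  by move/(prim_root_expr_inj alpha_prim (expn3_lt_n lt_im) (expn3_lt_n lt_jm)); apply: expnI.
have [/mapP[j] | beta_notin] := boolP (alpha ^+ e \in conj).
  rewrite mem_iota => /andP[_ lt_jm] beta_frob.
  have [x] := power_APN_not_frobenius charF e_APN j; apply/negP; rewrite negbK.
  have [-> | /(prim_root_expr_surj cardF_n alpha_prim)[i ->]] := eqVneq x 0.
    by rewrite !expr0n !eqn0Ngt e_gt0 expn_gt0.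
  by rewrite exprAC beta_frob exprAC.
have roots : all (root (map_poly (F3_to F) p1)) (alpha ^+ e :: conj).
  apply/andP; split; first exact/rootP.
  apply/allP => _ /mapP[j _ ->].
  exact/rootP/hornerF3_frobenius_root/(minpoly_root p1_min).
have p1_neq0 : map_poly (F3_to F) p1 != 0.
  by rewrite -size_poly_gt0 size_map_F3 // size_p1.
have := max_poly_roots p1_neq0 roots.
rewrite /= beta_notin conj_uniq size_map_F3 // size_p1 size_map size_iota.
by move=> /(_ isT); rewrite ltnn.
Qed.

Lemma coprime_p1_pe : coprimep p1 pe.
Proof. exact: minpoly_coprime p1_min pe_min p1_beta_neq0. Qed.

Lemma generator_neq0 : g != 0.
Proof. by rewrite mulf_neq0 // (minpoly_neq0 p1_min, minpoly_neq0 pe_min). Qed.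

Lemma size_generator : size g = (2 * m).+1.
Proof.
by rewrite size_mul ?size_p1 ?size_pe ?(minpoly_neq0 p1_min) ?(minpoly_neq0 pe_min) //; lia.
Qed.

Lemma mem_code c : (c \in C) = (g %| word_poly c).
Proof. by rewrite inE. Qed.

Lemma card_code : #|C| = (3 ^ (n - 2 * m))%N.
Proof.
pose enc (v : 'rV['F_3]_(n - 2 * m)) : 'rV['F_3]_n := poly_row n (g * word_poly v).
have size_enc (v : 'rV['F_3]_(n - 2 * m)) : (size (g * word_poly v)%R <= n)%N.
  apply: leq_trans (size_polyMleq _ _) _; rewrite size_generator.
  by have := size_word_poly v; have := double_m_le_n; lia.
have enc_inj : injective enc.
  move=> u v /(congr1 (@word_poly _)); rewrite !word_polyK //.
  by move/(mulfI generator_neq0)/word_poly_inj.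
suff -> : C = [set enc v | v in 'rV['F_3]_(n - 2 * m)].
  by rewrite card_imset // card_mx card_Fp // mul1n.
apply/setP => c; apply/idP/imsetP => [|[v _ ->]]; last first.
  by rewrite mem_code word_polyK // dvdp_mulr.
rewrite mem_code => /divpK cE.
set w := word_poly c %/ g.
have size_w : (size w <= n - 2 * m)%N.
  have [-> | w_neq0] := eqVneq w 0; first by rewrite size_poly0.
  have := size_word_poly c; rewrite -cE size_mul ?generator_neq0 //.
  by rewrite size_generator addnS /=; set s := size w; lia.
by exists (poly_row _ w); rewrite // /enc word_polyK // mulrC cE poly_rowK.
Qed.

Lemma span_code : (<<enum C>>%VS : {vspace 'rV['F_3]_n}) =i C.
Proof.
move=> c; apply/idP/idP => [c_span | cC]; last by apply: memv_span; rewrite mem_enum.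
rewrite (coord_span c_span); apply: (big_ind (fun c => c \in C)).
- by rewrite mem_code word_poly0 dvdp0.
- by move=> u v; rewrite !mem_code word_polyD; exact: dvdp_add.
move=> i _; rewrite mem_code word_polyZ -mul_polyC dvdp_mull // -mem_code -mem_enum.
by apply: mem_nth; rewrite size_tuple.
Qed.

Lemma code_dim_eq : code_dim C = (n - 2 * m)%N.
Proof.
have := card_vspace (<<enum C>>%VS : {vspace 'rV['F_3]_n}); rewrite card_Fp // => card_span.
apply: (@expnI 3) => //; rewrite /code_dim -card_span -card_code.
by apply: eq_card => c; rewrite span_code.
Qed.

Lemma code_hornerF3 c : c \in C ->
  hornerF3 (word_poly c) alpha = 0 /\ hornerF3 (word_poly c) (alpha ^+ e) = 0.
Proof.
rewrite mem_code => /divpK <-; rewrite !hornerF3M // (minpoly_root p1_min).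
by rewrite (minpoly_root pe_min) !(mulr0, mul0r).
Qed.

Lemma alpha_expr_neq (i j : 'I_n) : i != j -> alpha ^+ i != alpha ^+ j.
Proof.
by apply: contra_neq => /(prim_root_expr_inj alpha_prim (ltn_ord i) (ltn_ord j))/val_inj.
Qed.

Lemma code_weight_ge4 c : c \in C -> c != 0 -> (4 <= hweight c)%N.
Proof.
move=> cC; apply: contraR; rewrite -ltnNge ltnS => wt_le3.
have [|i1 [i2 [i3 [neq12 neq13 neq23 supp_c]]]] := @cover_by_three _ [set i | c ord0 i != 0].
  by rewrite card_ord wt_le3 expn3_predn; have := expn3_predn_ge3; lia.
have [c_alpha c_beta] := code_hornerF3 cC.
have supp3 := hornerF3_word_support3 charF _ neq12 neq13 neq23 supp_c.
rewrite supp3 in c_alpha; rewrite supp3 ![(alpha ^+ e) ^+ _]exprAC in c_beta.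
have alpha_neq0 (i : 'I_n) : alpha ^+ i != 0.
  by rewrite expf_neq0 // (prim_root_neq0 alpha_prim).
have /and3P[/eqP c1 /eqP c2 /eqP c3] := power_APN_F3_relation charF e_gt0 e_APN
  (alpha_neq0 i1) (alpha_neq0 i2) (alpha_neq0 i3) (alpha_expr_neq neq12)
  (alpha_expr_neq neq13) (alpha_expr_neq neq23) c_alpha c_beta.
apply/eqP/rowP => i; rewrite mxE.
have [|i_out] := boolP (i \in [set i1; i2; i3]).
  by rewrite !inE -orbA; case/or3P => /eqP->.
by apply/eqP; apply: contraNT i_out => ci; apply: (subsetP supp_c); rewrite inE.
Qed.

Lemma code_has_weight4_of (i1 i2 i3 i4 : 'I_n) : uniq [:: i1; i2; i3; i4] ->
    alpha ^+ i1 - alpha ^+ i2 - alpha ^+ i3 + alpha ^+ i4 = 0 ->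
    (alpha ^+ e) ^+ i1 - (alpha ^+ e) ^+ i2 - (alpha ^+ e) ^+ i3 + (alpha ^+ e) ^+ i4 = 0 ->
  exists2 c, c \in C & (c != 0) && (hweight c == 4%N).
Proof.
rewrite /= !inE !negb_or => /and4P[/and3P[n12 n13 n14] /andP[n23 n24] n34 _].
pose P : {poly 'F_3} := 'X^i1 - 'X^i2 - 'X^i3 + 'X^i4.
have hornerP (z : F) : hornerF3 P z = z ^+ i1 - z ^+ i2 - z ^+ i3 + z ^+ i4.
  by rewrite /P (hornerF3D charF) !(hornerF3B charF) !hornerF3Xn.
have coefP j : P`_j = (j == i1)%:R - (j == i2)%:R - (j == i3)%:R + (j == i4)%:R.
  by rewrite /P coefD !coefB !coefXn.
have size_P : (size P <= n)%N.
  by apply/leq_sizeP => j le_nj; rewrite coefP !gtn_eqF ?(leq_trans _ le_nj) // !subrr add0r.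
move=> rel1 rele; set c := poly_row n P.
have coef_c (j : 'I_n) :
    c ord0 j = (j == i1)%:R - (j == i2)%:R - (j == i3)%:R + (j == i4)%:R.
  by rewrite mxE coefP.
have cC : c \in C.
  rewrite mem_code word_polyK // Gauss_dvdp ?coprime_p1_pe //.
  have P_alpha : hornerF3 P alpha = 0 by rewrite hornerP.
  have P_beta : hornerF3 P (alpha ^+ e) = 0 by rewrite hornerP.
  by rewrite (minpoly_dvd charF p1_min P_alpha) (minpoly_dvd charF pe_min P_beta).
have c_neq0 : c != 0.
  apply/eqP => /rowP/(_ i1); rewrite coef_c mxE eqxx (negbTE n12) (negbTE n13) (negbTE n14).
  by rewrite !mulr0n !subr0 addr0 => /eqP; rewrite oner_eq0.
exists c => //; rewrite c_neq0 eqn_leq code_weight_ge4 // andbT.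
apply: leq_trans (card_size [:: i1; i2; i3; i4]); apply: subset_leq_card.
apply/subsetP => i; rewrite inE coef_c; apply: contraR.
rewrite !inE !negb_or => /and4P[/negbTE-> /negbTE-> /negbTE-> /negbTE->].
by rewrite !mulr0n !subr0 addr0.
Qed.

Lemma code_has_weight4 : exists2 c, c \in C & (c != 0) && (hweight c == 4%N).
Proof.
have [x1 [x2 [x3 [x4 [uniq_x]]]]] := power_APN_weight4_relation charF e_gt0 e_APN.
rewrite !inE !negb_or ![0 == _]eq_sym => /and4P[nz1 nz2 nz3 nz4] rel1 rele.
have [i1 E1] := prim_root_expr_surj cardF_n alpha_prim nz1.
have [i2 E2] := prim_root_expr_surj cardF_n alpha_prim nz2.
have [i3 E3] := prim_root_expr_surj cardF_n alpha_prim nz3.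
have [i4 E4] := prim_root_expr_surj cardF_n alpha_prim nz4.
apply: (@code_has_weight4_of i1 i2 i3 i4).
- by apply: (@map_uniq _ _ (fun i : 'I_n => alpha ^+ i)); rewrite /= -E1 -E2 -E3 -E4.
- by rewrite -E1 -E2 -E3 -E4.
by rewrite ![(alpha ^+ e) ^+ _]exprAC -E1 -E2 -E3 -E4.
Qed.
End TernaryCode.

Theorem theorem5 (m : nat) (F : finFieldType) (alpha : F) (e : nat)
    (p1 pe : {poly 'F_3}) :
  (0 < m)%N ->
  3%N \in [pchar F] ->
  #|F| = (3 ^ m)%N ->
  (3 ^ m - 1)%N.-primitive_root alpha ->
  (1 < e < 3 ^ m - 1)%N ->
  is_minpoly_F3 alpha p1 ->
  is_minpoly_F3 (alpha ^+ e) pe ->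
  APN (fun x : F => x ^+ e) ->
  let C := cyclic_code (3 ^ m - 1) (p1 * pe) in
  code_dim C = (3 ^ m - 1 - 2 * m)%N /\ has_min_dist C 4.
Proof.
(* [0 < m] follows from [1 < e < 3^m - 1]. *)
move=> _ charF cardF alpha_prim e_range p1_min pe_min e_APN C.
split; first exact: code_dim_eq charF cardF alpha_prim e_range p1_min pe_min e_APN.
split; first exact: code_has_weight4 charF cardF alpha_prim e_range p1_min pe_min e_APN.
exact: code_weight_ge4 charF cardF alpha_prim e_range p1_min pe_min e_APN.
Qed.
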